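(* Fix an integer $k\geq1$ and $V=\{0,\ldots,k\}$. Let $\varphi$ be a Boolean function on $V$ all of whose satisfying valuations have even size. Then there exists a Boolean function $\check\varphi$ on $V$ in canonical form such that $\check\varphi\simeq\varphi$.
   Context: A valuation is a subset $\nu\subseteq V$; $\nu^{(l)}$ is $\nu$ with membership of $l$ flipped. A Boolean function on $V$ is a map $\varphi:2^V\to\{\text{false},\text{true}\}$; $\mathrm{sat}(\varphi)$ is its set of satisfying valuations. $\varphi$ is in canonical form if (1) all its satisfying valuations have even size, and (2) there are no two valuations $\nu,\nu'$ of even size with $|\nu'|<|\nu|$, $\nu\in\mathrm{sat}(\varphi)$ and $\nu'\notin\mathrm{sat}(\varphi)$. Write $\varphi\xrightarrow{+(\nu,l)}\varphi'$ if $\nu,\nu^{(l)}\notin\mathrm{sat}(\varphi)$ and $\mathrm{sat}(\varphi')=\mathrm{sat}(\varphi)\cup\{\nu,\nu^{(l)}\}$, and $\varphi\xrightarrow{-(\nu,l)}\varphi'$ if $\varphi'\xrightarrow{+(\nu,l)}\varphi$. Write $\varphi\xrightarrow{\pm}\varphi'$ if one of these holds for some $\nu,l$; $\simeq$ is the reflexive-transitive closure of $\xrightarrow{\pm}$ (an equivalence relation). *)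

From mathcomp Require Import all_boot.
From Stdlib Require Import Relations.
Set Implicit Arguments. Unset Strict Implicit. Unset Printing Implicit Defensive.

Section Defs.
Variable V : finType.

Definition valuation := {set V}.
Definition boolfun := {ffun {set V} -> bool}.

Definition sat (phi : boolfun) : {set {set V}} := [set nu | phi nu].

Definition flip (nu : {set V}) (l : V) : {set V} :=
  if l \in nu then nu :\ l else l |: nu.

Definition canonical_form (phi : boolfun) : Prop :=
  (forall nu, nu \in sat phi -> ~~ odd #|nu|) /\
  ~ (exists nu nu' : {set V}, [/\ ~~ odd #|nu|, ~~ odd #|nu'|, #|nu'| < #|nu|,
        nu \in sat phi & nu' \notin sat phi]).

Definition plus_step (phi phi' : boolfun) (nu : {set V}) (l : V) : Prop :=
  nu \notin sat phi /\ flip nu l \notin sat phi /\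
  sat phi' = sat phi :|: [set nu; flip nu l].

Definition minus_step (phi phi' : boolfun) (nu : {set V}) (l : V) : Prop :=
  plus_step phi' phi nu l.

Definition pm_step (phi phi' : boolfun) : Prop :=
  exists nu l, plus_step phi phi' nu l \/ minus_step phi phi' nu l.

Definition equivb : relation boolfun := clos_refl_trans boolfun pm_step.
End Defs.

(* Read a Boolean function as its family S of satisfying valuations. Two even
   valuations nu and rho = flip (flip nu l) m at Hamming distance 2 can be
   exchanged in S: add the pair {flip nu l, rho}, then remove {nu, flip nu l};
   the middle valuation is odd, hence never in S. Walking along such steps,
   any nu in S can be exchanged for any even mu outside S. As long as S is not
   in canonical form, exchanging a larger satisfying valuation for a smaller
   unsatisfying one lowers the total size of S, so the process terminates. *)

From Stdlib Require Import Relations.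
From mathcomp Require Import all_boot.
Set Implicit Arguments. Unset Strict Implicit. Unset Printing Implicit Defensive.

Section CanonicalForm.
Variable V : finType.
Implicit Types (S : {set {set V}}) (nu mu rho : {set V}) (l m : V).

Definition boolfun_of S : boolfun V := [ffun nu => nu \in S].

Lemma sat_boolfun_of S : sat (boolfun_of S) = S.
Proof. by apply/setP => nu; rewrite inE ffunE. Qed.

Lemma boolfun_of_sat (phi : boolfun V) : boolfun_of (sat phi) = phi.
Proof. by apply/ffunP => nu; rewrite ffunE inE. Qed.

Lemma in_flip nu l x : (x \in flip nu l) = (x == l) (+) (x \in nu).
Proof.
rewrite /flip; case: ifP => l_nu; rewrite !inE;
  by case: eqVneq => [-> | _]; rewrite ?l_nu.
Qed.

Lemma odd_flip nu l : odd #|flip nu l| = ~~ odd #|nu|.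
Proof.
rewrite /flip; case: ifP => l_nu; last by rewrite cardsU1 l_nu.
by rewrite [#|nu|](cardsD1 l) l_nu /= negbK.
Qed.

Definition hamming nu mu := #|[set x | (x \in nu) != (x \in mu)]|.

Lemma hamming_gt0 nu mu : (0 < hamming nu mu) = (nu != mu).
Proof.
apply/card_gt0P/idP => [[x] | neq_nu_mu].
  by rewrite inE; apply: contraNneq => ->; rewrite eqxx.
have [x x_diff | x_same] := pickP (fun x => (x \in nu) != (x \in mu)).
  by exists x; rewrite inE.
by case/eqP: neq_nu_mu; apply/setP => x; apply/eqP/negbFE/x_same.
Qed.

Lemma hamming_flip nu mu l :
  (l \in nu) != (l \in mu) -> hamming (flip nu l) mu = (hamming nu mu).-1.
Proof.
move=> l_diff; rewrite /hamming [in RHS](cardsD1 l) inE l_diff add1n.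
apply: eq_card => x; rewrite !inE in_flip.
case: (eqVneq x l) => [-> | _] //=.
by move: l_diff; case: (l \in nu); case: (l \in mu).
Qed.

Lemma exists_flip_closer nu mu : nu != mu ->
  exists l, hamming (flip nu l) mu = (hamming nu mu).-1.
Proof.
rewrite -hamming_gt0 => /card_gt0P[l]; rewrite inE => l_diff.
by exists l; apply: hamming_flip.
Qed.

Definition all_even S := forall nu, nu \in S -> ~~ odd #|nu|.

Lemma equivb_trans (p q r : boolfun V) : equivb p q -> equivb q r -> equivb p r.
Proof. exact: rt_trans. Qed.

Definition exchange S nu mu := mu |: (S :\ nu).

Lemma all_even_exchange S nu mu :
  all_even S -> ~~ odd #|mu| -> all_even (exchange S nu mu).
Proof. by move=> evS ev_mu rho; rewrite !inE => /orP[/eqP -> | /andP[_ /evS]]. Qed.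

Lemma plus_step_boolfun_of S nu l : nu \notin S -> flip nu l \notin S ->
  plus_step (boolfun_of S) (boolfun_of (S :|: [set nu; flip nu l])) nu l.
Proof. by rewrite /plus_step !sat_boolfun_of. Qed.

Lemma equivb_exchange_flip2 S nu l m : all_even S -> nu \in S ->
  flip (flip nu l) m \notin S ->
  equivb (boolfun_of (exchange S nu (flip (flip nu l) m))) (boolfun_of S).
Proof.
set a := flip nu l; set rho := flip a m => evS nu_S rho_notS.
have odd_a : odd #|a| by rewrite odd_flip evS.
have a_notS : a \notin S by apply: (contraL _ odd_a) => /evS.
have neq_a_rho : a != rho.
  by apply: (contraTneq _ odd_a) => ->; rewrite odd_flip negbK.
have neq_nu_rho : nu != rho by apply: (contraNneq _ rho_notS) => <-.
apply: (@rt_trans _ _ _ (boolfun_of (S :|: [set a; rho]))); apply: rt_step.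
  exists nu, l; left.
  have -> : S :|: [set a; rho] = exchange S nu rho :|: [set nu; a].
    apply/setP => x; rewrite !inE.
    case: (eqVneq x nu) => [-> | _] /=; first by rewrite nu_S !orbT.
    by case: (x \in S); case: (x == a); case: (x == rho).
  apply: plus_step_boolfun_of; rewrite !inE.
    by rewrite eqxx (negPf neq_nu_rho).
  by rewrite -/a (negPf neq_a_rho) (negPf a_notS) andbF.
by exists a, m; right; apply: plus_step_boolfun_of.
Qed.

Lemma exchange_via_out S nu rho mu : rho \notin S ->
  exchange (exchange S nu rho) rho mu = exchange S nu mu.
Proof.
move=> rho_notS; apply/setP => x; rewrite !inE.
by case: (eqVneq x rho) => [-> | _]; rewrite ?(negPf rho_notS) ?andbF.
Qed.

Lemma exchange_via_in S nu rho mu : rho \in S -> rho != nu -> nu != mu ->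
  exchange (exchange S rho mu) nu rho = exchange S nu mu.
Proof.
move=> rho_S neq_rho_nu neq_nu_mu; apply/setP => x; rewrite !inE.
case: (eqVneq x rho) => [-> | _]; first by rewrite rho_S neq_rho_nu orbT.
by case: (eqVneq x mu) => [-> | //]; rewrite eq_sym neq_nu_mu.
Qed.

Lemma equivb_exchange S nu mu : all_even S -> nu \in S -> mu \notin S ->
  ~~ odd #|mu| -> equivb (boolfun_of (exchange S nu mu)) (boolfun_of S).
Proof.
have [n] := ubnP (hamming nu mu); elim: n S nu => // n IH S nu lt_dist.
move=> evS nu_S mu_notS ev_mu.
have neq_nu_mu : nu != mu by apply: (contraNneq _ mu_notS) => <-.
have [l dist_a] := exists_flip_closer neq_nu_mu; set a := flip nu l in dist_a.
have neq_a_mu : a != mu.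
  by apply: (contraTneq _ ev_mu) => <-; rewrite odd_flip evS.
have [m dist_rho] := exists_flip_closer neq_a_mu; set rho := flip a m in dist_rho.
have ev_rho : ~~ odd #|rho| by rewrite !odd_flip evS.
have lt_dist_rho : hamming rho mu < hamming nu mu.
  move: neq_a_mu; rewrite -hamming_gt0 dist_rho dist_a.
  by case: (hamming nu mu) => // h _; rewrite ltnS leq_pred.
have {}IH := IH _ _ (leq_trans lt_dist_rho (ltnSE lt_dist)).
(* Go from nu to mu through rho, performing first the exchange whose target
   is outside the current family. *)
have [rho_S | rho_notS] := boolP (rho \in S); last first.
  have [<- | neq_rho_mu] := eqVneq rho mu; first exact: equivb_exchange_flip2.
  have rho_S' : rho \in exchange S nu rho by rewrite !inE eqxx.
  have mu_notS' : mu \notin exchange S nu rho.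
    by rewrite !inE (negPf mu_notS) andbF orbF eq_sym.
  rewrite -(exchange_via_out _ _ rho_notS).
  apply: equivb_trans (IH _ (all_even_exchange evS ev_rho) rho_S' mu_notS' ev_mu) _.
  exact: equivb_exchange_flip2.
have neq_rho_nu : rho != nu by apply: (contraTneq _ lt_dist_rho) => ->; rewrite ltnn.
rewrite -(exchange_via_in rho_S neq_rho_nu neq_nu_mu).
apply: equivb_trans _ (IH _ evS rho_S mu_notS ev_mu).
apply: equivb_exchange_flip2; first exact: all_even_exchange.
  by rewrite !inE (eq_sym nu rho) neq_rho_nu nu_S orbT.
by rewrite -/a -/rho !inE eqxx andFb orbF; apply: (contraNneq _ mu_notS) => <-.
Qed.

Definition weight S := \sum_(nu in S) #|nu|.

Lemma weight_exchange S nu mu : nu \in S -> mu \notin S ->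
  weight (exchange S nu mu) + #|nu| = weight S + #|mu|.
Proof.
move=> nu_S mu_notS; rewrite /weight (big_setD1 _ nu_S) big_setU1 /=.
  by rewrite addnAC [RHS]addnAC [#|mu| + _]addnC.
by rewrite !inE (negPf mu_notS) andbF.
Qed.

Lemma exists_canonical_equivb S : all_even S ->
  exists phic : boolfun V, canonical_form phic /\ equivb phic (boolfun_of S).
Proof.
have [n] := ubnP (weight S); elim: n S => // n IH S lt_weight evS.
pose violation (p : {set V} * {set V}) :=
  [&& ~~ odd #|p.1|, ~~ odd #|p.2|, #|p.2| < #|p.1|, p.1 \in S & p.2 \notin S].
have [[nu mu] /and5P[_ ev_mu lt_mu_nu nu_S mu_notS] | no_violation] :=
  pickP violation.
  have lt_weight' : weight (exchange S nu mu) < weight S.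
    by rewrite -(ltn_add2r #|nu|) weight_exchange // ltn_add2l.
  have [phic [canon_phic equiv_phic]] :=
    IH _ (leq_trans lt_weight' (ltnSE lt_weight)) (all_even_exchange evS ev_mu).
  exists phic; split=> //.
  exact: equivb_trans equiv_phic (equivb_exchange _ _ _ _).
exists (boolfun_of S); split; last exact: rt_refl.
rewrite /canonical_form sat_boolfun_of; split=> //.
move=> [nu [mu [ev_nu ev_mu lt_mu_nu nu_S mu_notS]]].
have := no_violation (nu, mu).
by rewrite /violation /= ev_nu ev_mu lt_mu_nu nu_S mu_notS.
Qed.

End CanonicalForm.

Theorem lemma6p7 (k : nat) (hk : 1 <= k) (phi : boolfun 'I_k.+1) :
  (forall nu, nu \in sat phi -> ~~ odd #|nu|) ->
  exists phic : boolfun 'I_k.+1, canonical_form phic /\ equivb phic phi.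
Proof.
by move=> ev_phi; rewrite -(boolfun_of_sat phi); apply: exists_canonical_equivb.
Qed.
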